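(* Let $H$ be a complex Hilbert space, $A\in B(H)$ a nonzero positive semidefinite operator, and $T\in B_{A^{1/2}}(H)$. Then $T$ is $A$-invertible in $B_{A^{1/2}}(H)$ if and only if there exist operators $S_1,S_2\in B_{A^{1/2}}(H)$ such that $ATS_1=AS_2T=A$.
   Context: $B_{A^{1/2}}(H)=\{X\in B(H): R(X^*A^{1/2})\subset R(A^{1/2})\}$. A nonzero $T\in B_{A^{1/2}}(H)$ is $A$-invertible in $B_{A^{1/2}}(H)$ if there is a nonzero $S\in B_{A^{1/2}}(H)$ with $ATS=AST=A$. *)

From mathcomp Require Import all_boot all_algebra.
From mathcomp Require Import reals complex.
Import GRing.Theory Num.Theory.
Set Implicit Arguments. Unset Strict Implicit. Unset Printing Implicit Defensive.
Local Open Scope ring_scope.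
Local Open Scope complex_scope.

Record hilbert (R : realType) (V : lmodType R[i]) := Hilbert {
  ip : V -> V -> R[i];
  ip_linear : forall (a : R[i]) (x y z : V), ip (a *: x + y) z = a * ip x z + ip y z;
  ip_conj : forall x y : V, ip y x = (ip x y)^*;
  ip_ge0 : forall x : V, 0 <= ip x x;
  ip_eq0 : forall x : V, ip x x = 0 -> x = 0;
  ip_complete : forall u : nat -> V,
    (forall e : R[i], 0 < e -> exists N : nat, forall m n : nat, (N <= m)%N -> (N <= n)%N ->
        sqrtC (ip (u m - u n) (u m - u n)) < e) ->
    exists l : V, forall e : R[i], 0 < e -> exists N : nat, forall n : nat, (N <= n)%N ->
        sqrtC (ip (u n - l) (u n - l)) < e
}.

Section Ops.
Variables (R : realType) (V : lmodType R[i]) (H : hilbert V).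

Definition hnorm (x : V) : R[i] := sqrtC (ip H x x).

Definition bounded_op (T : V -> V) : Prop :=
  (forall (a : R[i]) (x y : V), T (a *: x + y) = a *: T x + T y) /\
  exists M : R[i], 0 <= M /\ forall x : V, hnorm (T x) <= M * hnorm x.

Definition is_adjoint (T Ts : V -> V) : Prop :=
  bounded_op Ts /\ forall x y : V, ip H (T x) y = ip H x (Ts y).

Definition positive_op (A : V -> V) : Prop :=
  bounded_op A /\ forall x : V, 0 <= ip H (A x) x.

Definition is_sqrt_op (A Rt : V -> V) : Prop :=
  positive_op Rt /\ forall x : V, Rt (Rt x) = A x.

Definition range_sub (F G : V -> V) : Prop := forall x : V, exists y : V, F x = G y.

Definition nonzero_op (T : V -> V) : Prop := exists x : V, T x <> 0.

(* X \in B_{A^{1/2}}(H), where Rt = A^{1/2}: R(X^* A^{1/2}) \subset R(A^{1/2}) *)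
Definition in_BA (Rt X : V -> V) : Prop :=
  bounded_op X /\ exists Xs : V -> V, is_adjoint X Xs /\ range_sub (fun x => Xs (Rt x)) Rt.

Definition A_invertible (A Rt T : V -> V) : Prop :=
  nonzero_op T /\
  exists S : V -> V, in_BA Rt S /\ nonzero_op S /\
    (forall x, A (T (S x)) = A x) /\ (forall x, A (S (T x)) = A x).

End Ops.

From mathcomp Require Import all_boot all_algebra.
From mathcomp Require Import reals complex.
From mathcomp Require Import ring.
Set Implicit Arguments. Unset Strict Implicit. Unset Printing Implicit Defensive.
Import GRing.Theory Num.Theory.
Local Open Scope ring_scope.
Local Open Scope complex_scope.

(* Every X in B_{A^{1/2}}(H) leaves N(A^{1/2}) = N(A) invariant: if A^{1/2} z = 0
   then ||A^{1/2} X z||^2 = <z, X^* A^{1/2} (A^{1/2} X z)> = <z, A^{1/2} w> = 0.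
   Hence A x = A y implies A X x = A X y.  If S1 is a right and S2 a left
   A-inverse of T, then A S1 = A S2 T S1 = A S2, so S2 is a two-sided A-inverse. *)

Section LinearMaps.
Variables (K : pzRingType) (U W : lmodType K).

Lemma linear_for0 (Z : zmodType) (s : GRing.Scale.law K Z) (f : U -> Z) :
  linear_for s f -> f 0 = 0.
Proof. by move=> /zmod_morphism_linear fB; rewrite -[X in f X](subrr 0) fB subrr. Qed.

Lemma linear_congr_ker (A : U -> W) (X : U -> U) :
  linear A -> linear X -> (forall z, A z = 0 -> A (X z) = 0) ->
  forall x y, A x = A y -> A (X x) = A (X y).
Proof.
move=> /zmod_morphism_linear AB /zmod_morphism_linear XB kerX x y Axy.
by apply/eqP; rewrite -subr_eq0 -AB -XB kerX // AB Axy subrr.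
Qed.

End LinearMaps.

Lemma sesquilinear_diag_eq0 (C : numClosedFieldType) (U : lmodType C)
    (h : U -> U -> C) :
  (forall a x y z, h (a *: x + y) z = a * h x z + h y z) ->
  (forall a x y z, h z (a *: x + y) = a^* * h z x + h z y) ->
  (forall v, h v v = 0) ->
  forall x y, h x y = 0.
Proof.
move=> hl hr hd x y.
have sum0 : h x y + h y x = 0.
  by have := hd (1 *: x + y); rewrite hl !hr !hd rmorph1 => <-; ring.
have diff0 : - 'i * h x y + 'i * h y x = 0.
  by have := hd ('i *: y + x); rewrite hl !hr !hd conjCi => <-; ring.
have : 2 * 'i * h x y = 0.
  have -> : 2 * 'i * h x y = 'i * (h x y + h y x) - (- 'i * h x y + 'i * h y x).
    by ring.
  by rewrite sum0 diff0 mulr0 subr0.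
by move/eqP; rewrite !mulf_eq0 pnatr_eq0 (negbTE (neq0Ci C)) /= => /eqP.
Qed.

Section HilbertSpace.
Variables (R : realType) (V : lmodType R[i]) (H : hilbert V).

Lemma ip0l z : ip H 0 z = 0.
Proof. exact: (linear_for0 (s := *%R) (fun a x y => ip_linear H a x y z)). Qed.

Lemma ip0r z : ip H z 0 = 0.
Proof. by rewrite ip_conj ip0l conjc0. Qed.

Lemma ipZDr a x y z : ip H z (a *: x + y) = a^* * ip H z x + ip H z y.
Proof. by rewrite ip_conj ip_linear rmorphD rmorphM /= -!ip_conj. Qed.

Lemma positive_op_selfadjoint B :
  positive_op H B -> forall x y, ip H (B x) y = ip H x (B y).
Proof.
move=> [[LB _] Bge0] x y; apply/eqP; rewrite -subr_eq0; apply/eqP.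
apply: (sesquilinear_diag_eq0 (h := fun x y => ip H (B x) y - ip H x (B y))).
- by move=> a u v w; rewrite LB !ip_linear; ring.
- by move=> a u v w; rewrite LB !ipZDr; ring.
- move=> v; rewrite [ip H v _]ip_conj; apply/eqP; rewrite subr_eq0 eq_sym.
  exact/eqP/geC0_conj.
Qed.

Lemma nonzero_op_of_cancel (A S T : V -> V) :
  linear A -> linear S -> nonzero_op A -> (forall x, A (S (T x)) = A x) ->
  nonzero_op T /\ nonzero_op S.
Proof.
move=> LA LS [x Ax] AST; split; [exists x | exists (T x)] => x0; apply: Ax;
  by rewrite -AST x0 ?(linear_for0 LS) (linear_for0 LA).
Qed.

Section SquareRoot.
Variables (A Rt : V -> V).
Hypothesis sqrtA : is_sqrt_op H A Rt.

Lemma sqrt_op_ker z : A z = 0 -> Rt z = 0.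
Proof.
case: sqrtA => posRt RtRt Az; apply: (ip_eq0 (h := H)).
by rewrite positive_op_selfadjoint // RtRt Az ip0r.
Qed.

Lemma in_BA_ker_stable X z : in_BA H Rt X -> A z = 0 -> A (X z) = 0.
Proof.
move=> [_ [Xs [[_ adjX] ranX]]] /sqrt_op_ker Rtz.
case: sqrtA => posRt RtRt.
have RtXz : Rt (X z) = 0.
  apply: (ip_eq0 (h := H)).
  rewrite positive_op_selfadjoint // adjX; have [w ->] := ranX (Rt (X z)).
  by rewrite -positive_op_selfadjoint // Rtz ip0l.
by rewrite -RtRt RtXz (linear_for0 posRt.1.1).
Qed.

End SquareRoot.
End HilbertSpace.

Theorem mainTheorem13 (R : realType) (V : lmodType R[i]) (H : hilbert V)
  (A Rt T : V -> V) :
  positive_op H A -> nonzero_op A -> is_sqrt_op H A Rt ->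
  in_BA H Rt T ->
  (A_invertible H A Rt T <->
   exists S1 S2 : V -> V, in_BA H Rt S1 /\ in_BA H Rt S2 /\
     (forall x, A (T (S1 x)) = A x) /\ (forall x, A (S2 (T x)) = A x)).
Proof.
move=> posA nzA sqrtA BT; split.
  by move=> [_ [S [BS [_ [TS ST]]]]]; exists S, S.
move=> [S1 [S2 [BS1 [BS2 [TS1 S2T]]]]].
have congrA X : in_BA H Rt X -> forall x y, A x = A y -> A (X x) = A (X y).
  move=> BX; apply: linear_congr_ker posA.1.1 BX.1.1 _ => z.
  by apply: (in_BA_ker_stable sqrtA BX).
have S1S2 x : A (S1 x) = A (S2 x).
  by rewrite -S2T; apply: congrA BS2 _ _ (TS1 x).
have TS2 x : A (T (S2 x)) = A x.
  by rewrite -[RHS]TS1; apply: congrA BT _ _ (esym (S1S2 x)).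
have [nzT nzS2] := nonzero_op_of_cancel posA.1.1 BS2.1.1 nzA S2T.
by split=> //; exists S2.
Qed.
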